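(* Let $\mathcal{L}_\to\subseteq\{\land,\lor,\to,\lnot,0,1\}$ be a language containing $\to$ and $\Phi$ a Sahlqvist quasiequation in $\mathcal{L}_\to$. If an $\mathcal{L}_\to$-subreduct $\boldsymbol{A}$ of a Heyting algebra validates $\mathsf{A}(\Phi)$, then the Heyting algebra $\mathsf{Up}(\boldsymbol{A}_\ast)$ validates $\mathsf{A}(\Phi)$.
   Context: An $\mathcal{L}_\to$-subreduct of a Heyting algebra is a subalgebra of its $\mathcal{L}_\to$-reduct; in it $x\to x$ is constant with value $1$, a formula $\varphi$ is valid if $\varphi\approx1$ holds, and a set of formulas is valid if each member is. An implicative filter of $\boldsymbol{A}$ is $F\subseteq A$ with $1\in F$ and $a,a\to b\in F\Rightarrow b\in F$; $\boldsymbol{A}_\ast$ is the poset under inclusion of meet irreducible implicative filters (proper, not the intersection of two implicative filters both different from it). $\mathsf{Up}(\mathbb{X})$ is the Heyting algebra of upsets of a poset $\mathbb{X}$ ($\cap,\cup$, $U\to V=X\smallsetminus{\downarrow}(U\smallsetminus V)$, $\emptyset$, $X$). Sahlqvist quasiequations: formulas over variables with $\land,\lor,\to,\lnot,0,1$; a variable occurrence is positive (negative) if the number of negations and implication antecedents in whose scope it lies is even (odd); positive/negative formulas have all occurrences so. Sahlqvist antecedent: built from variables, negative formulas, $0,1$ by $\land,\lor$. Sahlqvist implication: positive formula, or $\lnot\varphi$ with $\varphi$ a Sahlqvist antecedent, or $\varphi\to\psi$ with $\varphi$ a Sahlqvist antecedent and $\psi$ positive. $\Phi=\varphi_1\land y\le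 z\,\&\cdots\&\,\varphi_m\land y\le z\Longrightarrow y\le z$, $y,z$ distinct variables not in the $\varphi_i$, each $\varphi_i$ built from Sahlqvist implications by $\land,\lor$, $a\le b$ meaning $a\land b\approx a$; $\Phi$ is in $\mathcal{L}_\to$ if the $\varphi_i$ only use symbols of $\mathcal{L}_\to$. For each formula $\varphi(x_1..x_n)$ and $k\ge1$, $\boldsymbol{\varphi}^k$ is the finite set: $\boldsymbol{x_m}^k=\{x_m^1..x_m^k\}$; $\boldsymbol{1}^k=\{x_1^1\to x_1^1\}$; $\boldsymbol{0}^k=\{x_1^1,x_1^1\to0\}$; $(\boldsymbol{\psi\land\chi})^k=\boldsymbol{\psi}^k\cup\boldsymbol{\chi}^k$; with $\boldsymbol{\psi}^k=\{\psi_1..\psi_p\}$, $\boldsymbol{\chi}^k=\{\chi_1..\chi_t\}$: $(\boldsymbol{\lnot\psi})^k=\{\psi_1\to(\cdots(\psi_p\to0)\cdots)\}$, $(\boldsymbol{\psi\to\chi})^k=\{\psi_1\to(\cdots(\psi_p\to\chi_j)\cdots):j\le t\}$, $(\boldsymbol{\psi\lor\chi})^k=\{\psi_i\lor\chi_j:i\le p,j\le t\}$. For finite $\Gamma=\{\gamma_1..\gamma_n\}$, $\Gamma\to\varphi$ denotes $\{\gamma_1\to(\cdots(\gamma_n\to\varphi)\cdots)\}$. $\mathsf{A}(\Phi)=\bigcup_{k\ge1}\big(((\boldsymbol{\varphi_1}^k\to y)\cup\cdots\cup(\boldsymbol{\varphi_m}^k\to y))\to y\big)$, $y$ a variable not occurring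 in the $\boldsymbol{\varphi_i}^k$. *)

From HB Require Import structures.
From mathcomp Require Import all_boot all_order.
Set Implicit Arguments. Unset Strict Implicit. Unset Printing Implicit Defensive.
Import Order.Theory.
Local Open Scope order_scope.

Definition heyting_imp (d : Order.disp_t) (H : tbLatticeType d)
  (imp : H -> H -> H) : Prop :=
  forall a b c : H, (c `&` a <= b) = (c <= imp a b).

Inductive fm (V : Type) : Type :=
| FVar of V
| FAnd of fm V & fm V
| FOr of fm V & fm V
| FImp of fm V & fm V
| FNeg of fm V
| FZero
| FOne.
Arguments FZero {V}.
Arguments FOne {V}.

Fixpoint fm_map (V W : Type) (f : V -> W) (p : fm V) : fm W :=
  match p with
  | FVar x => FVar (f x)
  | FAnd a b => FAnd (fm_map f a) (fm_map f b)
  | FOr a b => FOr (fm_map f a) (fm_map f b)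
  | FImp a b => FImp (fm_map f a) (fm_map f b)
  | FNeg a => FNeg (fm_map f a)
  | FZero => FZero
  | FOne => FOne
  end.

Fixpoint fm_vars (V : Type) (p : fm V) : seq V :=
  match p with
  | FVar x => [:: x]
  | FAnd a b | FOr a b | FImp a b => fm_vars a ++ fm_vars b
  | FNeg a => fm_vars a
  | FZero | FOne => [::]
  end.

(* A language L_-> with  -> in L_-> subset {/\, \/, ->, ~, 0, 1}. *)
Record lang := Lang { l_and : bool; l_or : bool; l_neg : bool;
                      l_zero : bool; l_one : bool }.

Fixpoint in_lang (L : lang) (V : Type) (p : fm V) : bool :=
  match p with
  | FVar _ => true
  | FAnd a b => l_and L && in_lang L a && in_lang L b
  | FOr a b => l_or L && in_lang L a && in_lang L b
  | FImp a b => in_lang L a && in_lang L b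
  | FNeg a => l_neg L && in_lang L a
  | FZero => l_zero L
  | FOne => l_one L
  end.

Fixpoint eval (d : Order.disp_t) (H : tbLatticeType d) (imp : H -> H -> H)
  (V : Type) (v : V -> H) (p : fm V) : H :=
  match p with
  | FVar x => v x
  | FAnd a b => eval imp v a `&` eval imp v b
  | FOr a b => eval imp v a `|` eval imp v b
  | FImp a b => imp (eval imp v a) (eval imp v b)
  | FNeg a => imp (eval imp v a) \bot
  | FZero => \bot
  | FOne => \top
  end.

(* S (a subset of H) is (the universe of) a subalgebra of the
   L_->-reduct of the Heyting algebra (H, imp): nonempty and closed
   under the operations of L_->. *)
Definition subreduct (L : lang) (d : Order.disp_t) (H : tbLatticeType d)
  (imp : H -> H -> H) (S : H -> Prop) : Prop :=
  (exists a, S a) /\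
  (forall a b, S a -> S b -> S (imp a b)) /\
  (l_and L -> forall a b, S a -> S b -> S (a `&` b)) /\
  (l_or L -> forall a b, S a -> S b -> S (a `|` b)) /\
  (l_neg L -> forall a, S a -> S (imp a \bot)) /\
  (l_zero L -> S \bot) /\
  (l_one L -> S \top).

Definition valid_sub (d : Order.disp_t) (H : tbLatticeType d)
  (imp : H -> H -> H) (S : H -> Prop) (V : Type) (p : fm V) : Prop :=
  forall v : V -> H, (forall x, S (v x)) -> eval imp v p = \top.

Definition valid_sub_set (d : Order.disp_t) (H : tbLatticeType d)
  (imp : H -> H -> H) (S : H -> Prop) (V : Type) (P : fm V -> Prop) : Prop :=
  forall p, P p -> valid_sub imp S p.

Definition impl_filter (d : Order.disp_t) (H : tbLatticeType d)
  (imp : H -> H -> H) (S : H -> Prop) (F : H -> Prop) : Prop :=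
  [/\ forall a, F a -> S a,
      F \top &
      forall a b, S a -> S b -> F a -> F (imp a b) -> F b].

Definition mi_filter (d : Order.disp_t) (H : tbLatticeType d)
  (imp : H -> H -> H) (S : H -> Prop) (F : H -> Prop) : Prop :=
  [/\ impl_filter imp S F,
      exists2 a, S a & ~ F a &
      forall G1 G2, impl_filter imp S G1 -> impl_filter imp S G2 ->
        (forall a, F a <-> (G1 a /\ G2 a)) ->
        (forall a, F a <-> G1 a) \/ (forall a, F a <-> G2 a)].

Definition dual_space (d : Order.disp_t) (H : tbLatticeType d)
  (imp : H -> H -> H) (S : H -> Prop) : Type :=
  {F : H -> Prop | mi_filter imp S F}.

Definition dual_le (d : Order.disp_t) (H : tbLatticeType d)
  (imp : H -> H -> H) (S : H -> Prop) (F G : dual_space imp S) : Prop :=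
  forall a, proj1_sig F a -> proj1_sig G a.

Definition upset (X : Type) (le : X -> X -> Prop) (U : X -> Prop) : Prop :=
  forall x y, le x y -> U x -> U y.

(* Evaluation in Up(X): meet = intersection, join = union,
   U -> W = X \ down(U \ W), 0 = empty, 1 = X, ~U = U -> 0. *)
Fixpoint eval_up (X : Type) (le : X -> X -> Prop) (V : Type)
  (v : V -> X -> Prop) (p : fm V) : X -> Prop :=
  match p with
  | FVar x => v x
  | FAnd a b => fun x => eval_up le v a x /\ eval_up le v b x
  | FOr a b => fun x => eval_up le v a x \/ eval_up le v b x
  | FImp a b => fun x =>
      ~ (exists y, le x y /\ eval_up le v a y /\ ~ eval_up le v b y)
  | FNeg a => fun x => ~ (exists y, le x y /\ eval_up le v a y /\ ~ False)
  | FZero => fun _ => False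
  | FOne => fun _ => True
  end.

Definition valid_up (X : Type) (le : X -> X -> Prop) (V : Type)
  (p : fm V) : Prop :=
  forall v : V -> X -> Prop, (forall x, upset le (v x)) ->
    forall x, eval_up le v p x.

Definition valid_up_set (X : Type) (le : X -> X -> Prop) (V : Type)
  (P : fm V -> Prop) : Prop :=
  forall p, P p -> valid_up le p.

Fixpoint polar (V : Type) (b : bool) (p : fm V) : bool :=
  match p with
  | FVar _ => b
  | FAnd a c | FOr a c => polar b a && polar b c
  | FImp a c => polar (~~ b) a && polar b c
  | FNeg a => polar (~~ b) a
  | FZero | FOne => true
  end.

Definition positive (V : Type) (p : fm V) := polar true p.
Definition negative (V : Type) (p : fm V) := polar false p.

Fixpoint sahl_ante (V : Type) (p : fm V) : bool :=
  negative p ||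
  match p with
  | FVar _ | FZero | FOne => true
  | FAnd a c | FOr a c => sahl_ante a && sahl_ante c
  | _ => false
  end.

Definition sahl_impl (V : Type) (p : fm V) : bool :=
  positive p ||
  match p with
  | FNeg a => sahl_ante a
  | FImp a c => sahl_ante a && positive c
  | _ => false
  end.

Fixpoint sahl_body (V : Type) (p : fm V) : bool :=
  sahl_impl p ||
  match p with
  | FAnd a c | FOr a c => sahl_body a && sahl_body c
  | _ => false
  end.

(* Phi = phi_1 /\ y <= z & ... & phi_m /\ y <= z ==> y <= z is a Sahlqvist
   quasiequation in L_->. It is represented by the list [phis] of the
   phi_i together with the distinct variables y, z. *)
Definition sahlqvist_qe (L : lang) (phis : seq (fm nat)) (y z : nat) : Prop :=
  [/\ (0 < size phis)%N,
      y != z,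
      all (fun p => (y \notin fm_vars p) && (z \notin fm_vars p)) phis,
      all (@sahl_body nat) phis &
      all (@in_lang L nat) phis].

Definition imps (V : Type) (G : seq (fm V)) (p : fm V) : fm V :=
  foldr (@FImp V) p G.

(* The variable x_m^j is (m, j). *)
Fixpoint bold (k : nat) (p : fm nat) : seq (fm (nat * nat)) :=
  match p with
  | FVar m => [seq FVar (m, j) | j <- iota 1 k]
  | FOne => [:: FImp (FVar (1, 1)) (FVar (1, 1))]
  | FZero => [:: FVar (1, 1); FImp (FVar (1, 1)) FZero]
  | FAnd a b => bold k a ++ bold k b
  | FNeg a => [:: imps (bold k a) FZero]
  | FImp a b => [seq imps (bold k a) c | c <- bold k b]
  | FOr a b => [seq FOr a' b' | a' <- bold k a, b' <- bold k b]
  end.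

(* The member of A(Phi) for a given k; the fresh variable y is None,
   the variables x_m^j are Some (m, j). *)
Definition APhi_k (phis : seq (fm nat)) (k : nat) : fm (option (nat * nat)) :=
  let y := FVar (None : option (nat * nat)) in
  imps [seq imps (map (fm_map Some) (bold k p)) y | p <- phis] y.

Definition APhi (phis : seq (fm nat)) : fm (option (nat * nat)) -> Prop :=
  fun a => exists2 k, (0 < k)%N & a = APhi_k phis k.

(* If a member of A(Phi) fails at a point of A_* under a valuation of upsets, then
   above that point there is an F at which every phi_i fails under the valuation U
   reading x_m as the meet of its copies.  By Sahlqvist's minimal-valuation argument
   this failure depends only on finitely many points of U and on finitely many refuted
   positive formulas, so U may be shrunk to the closed valuation generated by those
   points.  Esakia's lemma, a compactness argument resting on the prime filter
   theorem, shrinks it further to a valuation generated by finitely many elements of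
   A.  That valuation is the image of an assignment in A of the copies x_m^j for k
   large enough, and the truth lemma for meet irreducible filters, together with an
   element y chosen by primeness of F, yields an assignment in A under which the k-th
   member of A(Phi) is not 1. *)

From mathcomp Require Import all_boot all_order.
From mathcomp Require classical_sets.
From Stdlib Require Import Classical.
From Stdlib Require List.
Import Order.Theory.
Local Open Scope order_scope.
Set Implicit Arguments. Unset Strict Implicit. Unset Printing Implicit Defensive.

Lemma not_Forall_exists A (P : A -> Prop) l :
  ~ List.Forall P l -> exists2 x, List.In x l & ~ P x.
Proof.
move=> nP; apply: NNPP => nx; apply: nP; apply/List.Forall_forall => x xl.
by apply: NNPP => nPx; apply: nx; exists x.
Qed.

Lemma Forall_allpairs A B C (f : A -> B -> C) (P : C -> Prop) s t :
  List.Forall P [seq f x y | x <- s, y <- t] <->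
  List.Forall (fun x => List.Forall (fun y => P (f x y)) t) s.
Proof.
elim: s => [|x s IH] /=; first by split.
by rewrite List.Forall_app IH List.Forall_map List.Forall_cons_iff.
Qed.

Lemma Forall_Forall_or A B (P : A -> Prop) (Q : B -> Prop) s t :
  List.Forall (fun x => List.Forall (fun y => P x \/ Q y) t) s <->
  List.Forall P s \/ List.Forall Q t.
Proof.
split=> [st|[sP|tQ]].
- case: (classic (List.Forall Q t)) => [|/not_Forall_exists [y yt nQy]]; [by right|left].
  by apply: List.Forall_impl st => x /List.Forall_forall /(_ y yt) [].
- by apply: List.Forall_impl sP => x Px; apply/List.Forall_forall; left.
- by apply/List.Forall_forall => x _; apply: List.Forall_impl tQ => y; right.
Qed.

Lemma all_Forall T (a : pred T) s : all a s <-> List.Forall a s.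
Proof.
elim: s => [|x s IH] /=; first by split.
by rewrite List.Forall_cons_iff -IH; split=> [/andP|[-> ->]].
Qed.

Lemma In_mem (T : eqType) (x : T) s : List.In x s <-> x \in s.
Proof.
elim: s => //= y s ->; rewrite in_cons eq_sym.
by split=> [[->|->]|/orP [/eqP ->|->]]; rewrite ?eqxx ?orbT; auto.
Qed.

Lemma Forall_bigcup_chain T (C : classical_sets.set (classical_sets.set T)) X0 E :
  C X0 -> classical_sets.total_on C classical_sets.subset ->
  List.Forall (classical_sets.bigcup C id) E ->
  exists X, [/\ C X, classical_sets.subset X0 X & List.Forall X E].
Proof.
move=> CX0 tot; elim: E => [|e E IH]; first by exists X0; split.
case/List.Forall_cons_iff=> [[Xe CXe Xee] /IH [X' [CX' X0X' X'E]]].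
have [XeX'|X'Xe] := tot _ _ CXe CX'.
- by exists X'; split=> //; constructor=> //; apply: XeX'.
- exists Xe; split=> //; last by constructor=> //; apply: List.Forall_impl X'E; apply: X'Xe.
  by move=> t X0t; apply: X'Xe; apply: X0X'.
Qed.

Lemma meets_le_sub d (M : tMeetSemilatticeType d) (l B : seq M) :
  List.Forall (fun b => List.In b l) B -> \meet_(a <- l) a <= \meet_(b <- B) b.
Proof.
elim: B => [|b B IH]; first by rewrite big_nil lex1.
case/List.Forall_cons_iff=> bl /IH lB; rewrite big_cons lexI lB andbT.
elim: l bl {IH lB} => //= a l IHl [<-|/IHl bl]; rewrite big_cons ?leIl //.
exact: leIxr.
Qed.

(** * Upset semantics and minimal valuations *)

Section UpsetSemantics.
Variables (X : Type) (le : X -> X -> Prop).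
Hypotheses (le_reflX : forall x, le x x)
  (le_transX : forall x y z, le x y -> le y z -> le x z).

Definition up_val (V : Type) (W : V -> X -> Prop) := forall v, upset le (W v).

Lemma eval_up_upset V (W : V -> X -> Prop) p : up_val W -> upset le (eval_up le W p).
Proof.
move=> uW; elim: p => [v|a IHa b IHb|a IHa b IHb|a IHa b IHb|a IHa| |] x y xy //=.
- exact: uW.
- by case=> /(IHa _ _ xy) ? /(IHb _ _ xy).
- by case=> [/(IHa _ _ xy)|/(IHb _ _ xy)]; [left|right].
- by move=> h [z [yz hz]]; apply: h; exists z; split=> //; exact: le_transX yz.
- by move=> h [z [yz hz]]; apply: h; exists z; split=> //; exact: le_transX yz.
Qed.

Lemma eval_up_imps V (W : V -> X -> Prop) l c x : up_val W ->
  eval_up le W (imps l c) x <->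
  forall y, le x y -> List.Forall (fun g => eval_up le W g y) l -> eval_up le W c y.
Proof.
move=> uW; elim: l x => [|g l IH] x /=.
  by split=> [h y xy _|h]; [exact: eval_up_upset h | exact: h].
split=> [h y xy /List.Forall_cons_iff [gy ly]|h [y [xy [gy ny]]]].
- apply: NNPP => nc; apply: h; exists y; split=> //; split=> //.
  by rewrite IH => /(_ y (le_reflX y) ly).
- apply: ny; rewrite IH => z yz lz; apply: h; first exact: le_transX yz.
  by constructor=> //; exact: eval_up_upset gy.
Qed.

Lemma eval_up_map V V' (f : V -> V') (W : V' -> X -> Prop) p :
  eval_up le W (fm_map f p) = eval_up le (fun v => W (f v)) p.
Proof. by elim: p => //= [a -> b ->|a -> b ->|a -> b ->|a ->]. Qed.

Lemma eval_up_ext V (W1 W2 : V -> X -> Prop) p x :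
  (forall v y, W1 v y <-> W2 v y) -> eval_up le W1 p x <-> eval_up le W2 p x.
Proof.
move=> hW; elim: p x => [v|a IHa b IHb|a IHa b IHb|a IHa b IHb|a IHa| |] x //=.
- by rewrite IHa IHb.
- by rewrite IHa IHb.
- by split=> h [y hy]; apply: h; exists y; rewrite IHa IHb in hy *.
- by split=> h [y hy]; apply: h; exists y; rewrite IHa in hy *.
Qed.

Section Polarity.
Variables (V : Type) (W1 W2 : V -> X -> Prop).
Hypothesis W12 : forall v x, W1 v x -> W2 v x.

Lemma eval_up_polar p b x : polar b p ->
  if b then eval_up le W1 p x -> eval_up le W2 p x
  else eval_up le W2 p x -> eval_up le W1 p x.
Proof.
elim: p b x => [v|a IHa c IHc|a IHa c IHc|a IHa c IHc|a IHa| |] [] x //=.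
- by move=> _; exact: W12.
- by case/andP=> /IHa h1 /IHc h2 [/h1 ? /h2 ?].
- by case/andP=> /IHa h1 /IHc h2 [/h1 ? /h2 ?].
- by case/andP=> /IHa h1 /IHc h2 [/h1|/h2]; [left|right].
- by case/andP=> /IHa h1 /IHc h2 [/h1|/h2]; [left|right].
- case/andP=> /IHa h1 /IHc h2 h [y [xy [ay ncy]]]; apply: h; exists y.
  by split=> //; split=> [|/h2]; [exact: h1|].
- case/andP=> /IHa h1 /IHc h2 h [y [xy [ay ncy]]]; apply: h; exists y.
  by split=> //; split=> [|/h2]; [exact: h1|].
- by move/IHa=> h1 h [y [xy [ay _]]]; apply: h; exists y; split=> //; split=> //; exact: h1.
- by move/IHa=> h1 h [y [xy [ay _]]]; apply: h; exists y; split=> //; split=> //; exact: h1.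
Qed.

Lemma eval_up_positive p x : positive p -> eval_up le W1 p x -> eval_up le W2 p x.
Proof. exact: (eval_up_polar (b := true)). Qed.

Lemma eval_up_negative p x : negative p -> eval_up le W2 p x -> eval_up le W1 p x.
Proof. exact: (eval_up_polar (b := false)). Qed.

End Polarity.

Lemma eval_up_bold (W : nat * nat -> X -> Prop) k p x : up_val W ->
  List.Forall (fun g => eval_up le W g x) (bold k p) <->
  eval_up le (fun m y => List.Forall (fun j => W (m, j) y) (iota 1 k)) p x.
Proof.
move=> uW; elim: p x => [m|a IHa b IHb|a IHa b IHb|a IHa b IHb|a IHa| |] x /=.
- by rewrite List.Forall_map.
- by rewrite List.Forall_app IHa IHb.
- by rewrite Forall_allpairs Forall_Forall_or IHa IHb.
- rewrite List.Forall_map; split=> [h [y [xy [ay nby]]]|h].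
  + apply: nby; rewrite -IHb; apply/List.Forall_forall => c cb.
    have /List.Forall_forall /(_ c cb) /(eval_up_imps _ _ _ uW) := h.
    by apply=> //; rewrite IHa.
  + apply/List.Forall_forall => c cb; apply/(eval_up_imps _ _ _ uW) => y xy ay.
    apply: NNPP => nc; apply: h; exists y; split=> //; split; first by rewrite -IHa.
    by rewrite -IHb => /List.Forall_forall /(_ c cb).
- rewrite List.Forall_cons_iff eval_up_imps //; split=> [[h _] [y [xy [ay _]]]|h].
  + by apply: (h y xy); rewrite IHa.
  + by split=> // y xy ay; apply: h; exists y; split=> //; split=> //; rewrite -IHa.
- split=> // /List.Forall_cons_iff [v11 /List.Forall_cons_iff [/= nv _]].
  by apply: nv; exists x; split; [exact: le_reflX | split].
- by split=> // _; constructor=> // -[y [_ []]].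
Qed.

Lemma eval_up_bold_imp (V : option (nat * nat) -> X -> Prop) k p x : up_val V ->
  eval_up le V (imps (map (fm_map Some) (bold k p)) (FVar None)) x -> ~ V None x ->
  ~ eval_up le (fun m y => List.Forall (fun j => V (Some (m, j)) y) (iota 1 k)) p x.
Proof.
move=> uV /(eval_up_imps _ _ _ uV) h nVx px; apply/nVx/h; first exact: le_reflX.
have uW : up_val (fun q => V (Some q)) by move=> q; exact: uV.
apply/List.Forall_map; apply: List.Forall_impl (proj2 (eval_up_bold k p x uW) px).
by move=> g; rewrite eval_up_map.
Qed.

Variable L : lang.
Hypothesis neg_zero : l_neg L -> l_zero L.

Definition satisfies (U : nat -> X -> Prop) (P : seq (nat * X)) (O : seq (X * fm nat)) :=
  List.Forall (fun q => U q.1 q.2) P /\ List.Forall (fun o => ~ eval_up le U o.2 o.1) O.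

(* Sahlqvist's minimal valuation in order-theoretic form: the refutation of
   [ss] at [x] only depends on finitely many points of [U] and on finitely
   many refutations of positive formulas. *)
Definition finitely_refuted (U : nat -> X -> Prop) (ss : seq (fm nat)) (x : X) :=
  exists P O, [/\ satisfies U P O,
    List.Forall (fun o : X * fm nat => positive o.2 && in_lang L o.2) O &
    forall W, up_val W -> satisfies W P O -> List.Forall (fun s => ~ eval_up le W s x) ss].

Lemma finitely_refuted_cat U ss1 ss2 x :
  finitely_refuted U ss1 x -> finitely_refuted U ss2 x -> finitely_refuted U (ss1 ++ ss2) x.
Proof.
move=> [P1 [O1 [[hP1 hO1] ok1 r1]]] [P2 [O2 [[hP2 hO2] ok2 r2]]].
exists (P1 ++ P2), (O1 ++ O2); split; last 1 first.
- move=> W uW [/List.Forall_app [wP1 wP2] /List.Forall_app [wO1 wO2]].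
  by apply/List.Forall_app; split; [exact: r1 | exact: r2].
- by split; apply/List.Forall_app.
- exact/List.Forall_app.
Qed.

Lemma finitely_refuted_weaken U ss t x : finitely_refuted U ss x ->
  (forall W, List.Forall (fun s => ~ eval_up le W s x) ss -> ~ eval_up le W t x) ->
  finitely_refuted U [:: t] x.
Proof.
move=> [P [O [hU hO hW]]] tss; exists P, O; split=> // W uW /(hW W uW) /tss nt.
by constructor.
Qed.

Definition supported (U : nat -> X -> Prop) (a : fm nat) (x : X) :=
  exists Vs Ns, [/\ List.Forall (fun m => U m x) Vs,
    all (fun n => negative n && in_lang L n) Ns,
    List.Forall (fun n => eval_up le U n x) Ns &
    forall W y, List.Forall (fun m => W m y) Vs ->
      List.Forall (fun n => eval_up le W n y) Ns -> eval_up le W a y].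

Lemma sahl_ante_supported a U x :
  sahl_ante a -> in_lang L a -> eval_up le U a x -> supported U a x.
Proof.
have neg_supported b : negative b -> in_lang L b -> eval_up le U b x -> supported U b x.
  move=> nb lb hb; exists [::], [:: b]; rewrite /= nb lb.
  split=> //; first by constructor.
  by move=> W y _ /List.Forall_cons_iff [].
elim: a => [m|a IHa c IHc|a IHa c IHc|a IHa c IHc|a IHa| |] /orP [na|sa] la ha;
  try exact: neg_supported; move: sa la ha => //=.
- move=> _ _ hm; exists [:: m], [::]; split=> //; first by constructor.
  by move=> W y /List.Forall_cons_iff [].
- case/andP=> sa sc /andP [/andP [_ la] lc] [ha hc].
  have [Vs1 [Ns1 [h1 n1 h2 h3]]] := IHa sa la ha.
  have [Vs2 [Ns2 [h4 n2 h5 h6]]] := IHc sc lc hc.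
  exists (Vs1 ++ Vs2), (Ns1 ++ Ns2); split.
  + by apply/List.Forall_app.
  + by rewrite all_cat n1 n2.
  + by apply/List.Forall_app.
  + move=> W y /List.Forall_app [? ?] /List.Forall_app [? ?].
    by split; [exact: h3 | exact: h6].
- case/andP=> sa sc /andP [/andP [_ la] lc] [ha|hc].
  + have [Vs [Ns [h1 n1 h2 h3]]] := IHa sa la ha.
    by exists Vs, Ns; split=> // W y ? ?; left; exact: h3.
  + have [Vs [Ns [h1 n1 h2 h3]]] := IHc sc lc hc.
    by exists Vs, Ns; split=> // W y ? ?; right; exact: h3.
Qed.

Lemma positive_imps (Ns : seq (fm nat)) c : all (fun n => negative n && in_lang L n) Ns ->
  positive c && in_lang L c -> positive (imps Ns c) && in_lang L (imps Ns c).
Proof.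
rewrite /positive /negative.
by elim: Ns => //= n Ns IH /andP [/andP [-> ->] /IH h] /h /andP [-> ->].
Qed.

Lemma sahl_imp_finitely_refuted a c U x y :
  sahl_ante a -> in_lang L a -> positive c -> in_lang L c -> up_val U ->
  le x y -> eval_up le U a y -> ~ eval_up le U c y -> finitely_refuted U [:: FImp a c] x.
Proof.
move=> sa la pc lc uU xy ay ncy.
have [Vs [Ns [hV nN hN ha]]] := sahl_ante_supported sa la ay.
exists [seq (m, y) | m <- Vs], [:: (y, imps Ns c)]; split.
- split; first by rewrite List.Forall_map.
  constructor=> //=; rewrite eval_up_imps // => h.
  by apply/ncy/h; first exact: le_reflX.
- by constructor=> //; rewrite positive_imps // pc lc.
- move=> W uW [/List.Forall_map hP /List.Forall_cons_iff [/= hO _]]; constructor=> //=.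
  move: hO; rewrite eval_up_imps // => hO h; apply: hO => z yz hNz.
  apply: NNPP => ncz; apply: h; exists z; split; first exact: le_transX yz.
  split=> //; apply: ha hNz; apply: List.Forall_impl hP => m Wm; exact: uW Wm.
Qed.

Lemma sahl_impl_finitely_refuted s U x : sahl_impl s -> in_lang L s -> up_val U ->
  ~ eval_up le U s x -> finitely_refuted U [:: s] x.
Proof.
move=> /orP [ps|si] ls uU ns.
  exists [::], [:: (x, s)]; split.
  - by split; constructor.
  - by constructor=> //; rewrite /= ps ls.
  - by move=> W _ [_ /List.Forall_cons_iff [? _]]; constructor.
case: s si ls ns => //= [a c /andP [sa pc] /andP [la lc]|a sa /andP [ln la]]
  /NNPP [y [xy [ay ncy]]].
- exact: (sahl_imp_finitely_refuted sa la pc lc uU xy ay ncy).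
- apply: finitely_refuted_weaken
    (sahl_imp_finitely_refuted (c := FZero) sa la isT (neg_zero ln) uU xy ay ncy) _.
  by move=> W h; exact: (List.Forall_inv h).
Qed.

Lemma sahl_body_finitely_refuted s U x : sahl_body s -> in_lang L s -> up_val U ->
  ~ eval_up le U s x -> finitely_refuted U [:: s] x.
Proof.
elim: s => [m|a IHa c IHc|a IHa c IHc|a IHa c IHc|a IHa| |] /orP [si|sb] ls uU ns;
  try exact: sahl_impl_finitely_refuted; move: sb ls ns => //=.
- case/andP=> sa sc /andP [/andP [_ la] lc] ns.
  have [ha|na] := classic (eval_up le U a x).
  + apply: finitely_refuted_weaken (IHc sc lc uU (fun hc => ns (conj ha hc))) _.
    by move=> W /List.Forall_cons_iff [nc _] [_ /nc].
  + apply: finitely_refuted_weaken (IHa sa la uU na) _.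
    by move=> W /List.Forall_cons_iff [na' _] [/na'].
- case/andP=> sa sc /andP [/andP [_ la] lc] ns.
  have na := IHa sa la uU (ns \o @or_introl _ _).
  have nc := IHc sc lc uU (ns \o @or_intror _ _).
  apply: finitely_refuted_weaken (finitely_refuted_cat na nc) _ => W.
  by move=> /List.Forall_cons_iff [na' /List.Forall_cons_iff [nc' _]] [/na'|/nc'].
Qed.

Lemma sahl_bodies_finitely_refuted ss U x :
  all (fun s => sahl_body s && in_lang L s) ss -> up_val U ->
  List.Forall (fun s => ~ eval_up le U s x) ss -> finitely_refuted U ss x.
Proof.
move=> + uU; elim: ss => [|s ss IH] /=.
  by move=> _ _; exists [::], [::]; split=> //; split; constructor.
case/andP=> /andP [bs ls] /IH IHss /List.Forall_cons_iff [ns nss].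
exact: (finitely_refuted_cat (sahl_body_finitely_refuted bs ls uU ns) (IHss nss)).
Qed.

End UpsetSemantics.

Lemma in_lang_imps L V (l : seq (fm V)) c :
  List.Forall (@in_lang L V) l -> in_lang L c -> in_lang L (imps l c).
Proof. by elim: l => //= g l IH /List.Forall_cons_iff [-> /IH]. Qed.

Lemma in_lang_bold L k p :
  (l_neg L -> l_zero L) -> in_lang L p -> List.Forall (@in_lang L _) (bold k p).
Proof.
move=> neg_zero; elim: p => [m|a IHa b IHb|a IHa b IHb|a IHa b IHb|a IHa| |] //=.
- by move=> _; apply/List.Forall_map/List.Forall_forall.
- by case/andP=> /andP [_ /IHa ha] /IHb hb; apply/List.Forall_app.
- case/andP=> /andP [lo /IHa ha] /IHb hb; apply/Forall_allpairs.
  apply: List.Forall_impl ha => a' la; apply: List.Forall_impl hb => b' lb.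
  by rewrite /= lo la lb.
- case/andP=> /IHa ha /IHb hb; apply/List.Forall_map.
  by apply: List.Forall_impl hb => c; exact: in_lang_imps.
- by case/andP=> /neg_zero lz /IHa ha; constructor=> //; exact: in_lang_imps.
- by move=> lz; do !constructor; rewrite /= lz.
- by move=> _; do !constructor.
Qed.

(** * Heyting algebras and implicative filters *)

Section Heyting.
Variables (d : Order.disp_t) (H : tbLatticeType d) (imp : H -> H -> H).
Hypothesis Himp : heyting_imp imp.

Lemma le_imp a b c : (c <= imp a b) = (c `&` a <= b).
Proof. by rewrite Himp. Qed.

Lemma meet_imp_le a b : a `&` imp a b <= b.
Proof. by rewrite meetC -le_imp. Qed.

Lemma imp_top_bot : imp \top \bot = \bot.
Proof. by apply/le_anti; rewrite le0x andbT -[X in X <= _]meetx1 -le_imp. Qed.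

Lemma imp_meet_le x u v : imp x u `&` imp x (imp u v) <= imp x v.
Proof.
rewrite le_imp; apply: le_trans (meet_imp_le u v).
by rewrite lexI; apply/andP; split; rewrite -le_imp ?leIl ?leIr.
Qed.

Lemma join_imp_le a b c : (a `|` b) `&` (imp a c `&` imp b c) <= c.
Proof.
rewrite -le_imp leUx !le_imp; apply/andP; split.
- by apply: le_trans (meet_imp_le a c); apply: leI2 => //; exact: leIl.
- by apply: le_trans (meet_imp_le b c); apply: leI2 => //; exact: leIr.
Qed.

Definition himps (l : seq H) (c : H) : H := foldr imp c l.

Lemma le_himps l c x : (x <= himps l c) = (x `&` \meet_(a <- l) a <= c).
Proof.
elim: l x => [|a l IH] x /=; first by rewrite big_nil meetx1.
by rewrite le_imp IH big_cons meetA.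
Qed.

Lemma himps_top l c : \meet_(a <- l) a <= c -> himps l c = \top.
Proof. by move=> lc; apply/le_anti; rewrite lex1 le_himps leIxr. Qed.

Lemma imp_top a b : a <= b -> imp a b = \top.
Proof. by move=> ab; have := @himps_top [:: a] b; rewrite big_seq1; apply. Qed.

Lemma eval_imps V (v : V -> H) l c :
  eval imp v (imps l c) = himps (map (eval imp v) l) (eval imp v c).
Proof. by elim: l => //= g l ->. Qed.

Lemma eval_map V V' (f : V -> V') (v : V' -> H) p :
  eval imp v (fm_map f p) = eval imp (fun x => v (f x)) p.
Proof. by elim: p => //= [a -> b ->|a -> b ->|a -> b ->|a ->]. Qed.

End Heyting.

Lemma dual_le_refl {d} {H : tbLatticeType d} {imp : H -> H -> H} {S : H -> Prop}
  (G : dual_space imp S) : dual_le G G.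
Proof. by []. Qed.

Lemma dual_le_trans {d} {H : tbLatticeType d} {imp : H -> H -> H} {S : H -> Prop}
  (F G K : dual_space imp S) : dual_le F G -> dual_le G K -> dual_le F K.
Proof. by move=> FG GK a /FG /GK. Qed.

Section Filters.
Variables (L : lang) (d : Order.disp_t) (H : tbLatticeType d) (imp : H -> H -> H).
Hypothesis Himp : heyting_imp imp.
Variable S : H -> Prop.
Hypothesis HS : subreduct L imp S.

Local Notation ifilter := (impl_filter imp S).
Local Notation mi := (mi_filter imp S).
Local Notation himps := (himps imp).

Lemma S_imp a b : S a -> S b -> S (imp a b).
Proof. by case: HS => _ [Simp _]; apply: Simp. Qed.

Lemma S_top : S \top.
Proof. by case: HS => [[a Sa] _]; rewrite -(imp_top Himp (lexx a)); apply: S_imp. Qed.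

Lemma S_himps l c : List.Forall S l -> S c -> S (himps l c).
Proof.
by elim: l => //= a l IH /List.Forall_cons_iff [Sa /IH Sl] Sc; apply: S_imp => //; apply: Sl.
Qed.

Lemma S_eval V (v : V -> H) p : (forall x, S (v x)) -> in_lang L p -> S (eval imp v p).
Proof.
case: HS => _ [_ [Sand [Sor [Sneg [Szero Sone]]]]] Sv.
elim: p => [x|a IHa b IHb|a IHa b IHb|a IHa b IHb|a IHa| |] //=.
- by case/andP=> /andP [la /IHa ?] /IHb ?; apply: Sand.
- by case/andP=> /andP [lo /IHa ?] /IHb ?; apply: Sor.
- by case/andP=> /IHa ? /IHb ?; apply: S_imp.
- by case/andP=> ln /IHa ?; apply: Sneg.
Qed.

Lemma S_bot_neg : l_neg L -> S \bot.
Proof.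
case: HS => _ [_ [_ [_ [Sneg _]]]] ln.
by rewrite -(imp_top_bot Himp); apply: Sneg ln _ S_top.
Qed.

Lemma ifilterS F a : ifilter F -> F a -> S a.
Proof. by case=> + _ _; apply. Qed.

Lemma ifilter_top F : ifilter F -> F \top.
Proof. by case. Qed.

Lemma ifilter_mp F a b : ifilter F -> S a -> S b -> F a -> F (imp a b) -> F b.
Proof. by case=> _ _; apply. Qed.

Lemma ifilter_himps F l c : ifilter F -> List.Forall F l -> S c -> F (himps l c) -> F c.
Proof.
move=> fF; elim: l => [|a l IH] //= /List.Forall_cons_iff [Fa Fl] Sc Fi.
apply: IH => //; apply: (ifilter_mp fF _ _ Fa Fi); first exact: ifilterS Fa.
by apply: S_himps => //; apply: List.Forall_impl Fl => x; apply: ifilterS.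
Qed.

Lemma ifilter_meet F l c : ifilter F -> List.Forall F l -> \meet_(a <- l) a <= c -> S c -> F c.
Proof.
move=> fF Fl lc Sc; apply: (ifilter_himps fF Fl Sc).
by rewrite (himps_top Himp lc); exact: ifilter_top.
Qed.

Lemma ifilter_le F a b : ifilter F -> F a -> a <= b -> S b -> F b.
Proof.
by move=> fF Fa ab; apply: (ifilter_meet (l := [:: a])); rewrite ?big_seq1 //; constructor.
Qed.

Lemma mi_nbot F : mi F -> ~ F \bot.
Proof.
case=> fF [a Sa nFa] _ Fb; apply: nFa.
exact: ifilter_le fF Fb (le0x a) Sa.
Qed.

Definition filter_join (F T : H -> Prop) (c : H) : Prop :=
  S c /\ exists A B, [/\ List.Forall F A, List.Forall T B &
                         \meet_(a <- A) a `&` \meet_(b <- B) b <= c].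

Lemma filter_join_ifilter F T : ifilter F -> ifilter (filter_join F T).
Proof.
move=> fF; split.
- by move=> a [].
- by split; [exact: S_top | exists [::], [::]; rewrite lex1].
- move=> a b Sa Sb [_ [A1 [B1 [FA1 TB1 le1]]]] [_ [A2 [B2 [FA2 TB2 le2]]]].
  split=> //; exists (A1 ++ A2), (B1 ++ B2); rewrite !big_cat /=.
  split; try exact/List.Forall_app.
  apply: le_trans (meet_imp_le Himp a b); rewrite lexI; apply/andP; split.
  + by apply: le_trans le1; apply: leI2; exact: leIl.
  + by apply: le_trans le2; apply: leI2; exact: leIr.
Qed.

Lemma filter_joinl F T a : ifilter F -> F a -> filter_join F T a.
Proof.
move=> fF Fa; split; first exact: ifilterS Fa.
by exists [:: a], [::]; rewrite big_seq1 big_nil meetx1; split; try constructor.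
Qed.

Lemma filter_joinr F T a : T a -> S a -> filter_join F T a.
Proof.
move=> Ta Sa; split=> //; exists [::], [:: a].
by rewrite big_seq1 big_nil meet1x; split; try constructor.
Qed.

Lemma filter_join_least F T G : ifilter G -> (forall a, F a -> G a) ->
  (forall a, T a -> G a) -> forall a, filter_join F T a -> G a.
Proof.
move=> fG FG TG a [Sa [A [B [FA TB le]]]].
apply: (ifilter_meet (l := A ++ B)) => //; last by rewrite big_cat.
by apply/List.Forall_app; split; [apply: List.Forall_impl FA | apply: List.Forall_impl TB].
Qed.

Lemma ifilter_bigcap Fs : List.Forall ifilter Fs ->
  ifilter (fun s => S s /\ List.Forall (fun G => G s) Fs).
Proof.
move=> /List.Forall_forall fFs; split.
- by move=> a [].
- split; first exact: S_top.
  by apply/List.Forall_forall => G /fFs; apply: ifilter_top.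
- move=> a b Sa Sb [_ /List.Forall_forall Ha] [_ /List.Forall_forall Hab].
  split=> //; apply/List.Forall_forall => G GFs.
  exact: ifilter_mp (fFs G GFs) Sa Sb (Ha G GFs) (Hab G GFs).
Qed.

(** * The prime filter theorem *)

Definition avoids (Es : seq H -> Prop) (F : H -> Prop) : Prop :=
  ~ exists2 E, Es E & List.Forall F E.

Definition directed (Es : seq H -> Prop) : Prop :=
  forall E1 E2, Es E1 -> Es E2 -> exists2 E, Es E &
    forall F, ifilter F -> List.Forall F E1 \/ List.Forall F E2 -> List.Forall F E.

Lemma exists_maximal_avoiding K Es : ifilter K -> avoids Es K ->
  exists M, [/\ ifilter M, (forall a, K a -> M a), avoids Es M &
    forall G, ifilter G -> (forall a, M a -> G a) -> avoids Es G -> forall a, G a -> M a].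
Proof.
move=> fK aK; pose good B := [/\ ifilter B, (forall a, K a -> B a) & avoids Es B].
have [C sub tot|M [PM maxM]] :=
  @classical_sets.Zorn_bigcup H (fun B => (forall a, ~ B a) \/ good B).
  have good_mem X a : C X -> X a -> good X by move=> CX Xa; case: (sub X CX) => // /(_ a).
  have [[X0 CX0 [a0 X0a0]]|nX] := classic (exists2 X, C X & exists a, X a); last first.
    by left=> a [X CX Xa]; apply: nX; exists X => //; exists a.
  have [fX0 KX0 _] := good_mem _ _ CX0 X0a0.
  have fin E : List.Forall (classical_sets.bigcup C id) E ->
      exists X, [/\ C X, good X & List.Forall X E].
    case/(Forall_bigcup_chain CX0 tot)=> X [CX X0X XE]; exists X; split=> //.
    exact: good_mem CX (X0X _ X0a0).
  right; split; first split.
  - by move=> a [X CX Xa]; case: (good_mem _ _ CX Xa) => fX _ _; exact: ifilterS fX Xa.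
  - by exists X0 => //; exact: ifilter_top.
  - move=> a b Sa Sb Ua Uab; have [|X [CX [fX _ _] XE]] := fin [:: a; imp a b].
      by do !constructor.
    case/List.Forall_cons_iff: XE => Xa /List.Forall_cons_iff [Xab _].
    by exists X => //; exact: ifilter_mp fX Sa Sb Xa Xab.
  - by move=> a Ka; exists X0 => //; exact: KX0.
  - by case=> E EsE /fin [X [_ [_ _ aX] XE]]; apply: aX; exists E.
have [emp|[fM KM aM]] := PM.
  case: (maxM K); last by right.
  split; first by move=> a /emp.
  by move=> KM; apply: (emp \top); apply: KM; exact: ifilter_top.
exists M; split=> // G fG MG aG a Ga; apply: NNPP => nMa.
apply: (maxM G); last by right; split=> // b /KM /MG.
by split=> // GM; apply: nMa; apply: GM.
Qed.

Lemma maximal_avoiding_mi Es M :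
  (forall E, Es E -> List.Forall S E) -> (exists E, Es E) -> directed Es ->
  ifilter M -> avoids Es M ->
  (forall G, ifilter G -> (forall a, M a -> G a) -> avoids Es G -> forall a, G a -> M a) ->
  mi M.
Proof.
move=> EsS [E0 EsE0] dir fM aM maxM; split=> //.
  have [e eE0 nMe] : exists2 e, List.In e E0 & ~ M e.
    by apply: not_Forall_exists => ME0; apply: aM; exists E0.
  by exists e => //; move/List.Forall_forall: (EsS _ EsE0); apply.
move=> G1 G2 f1 f2 eqM.
have bad G : ifilter G -> (forall a, M a -> G a) -> ~ (forall a, M a <-> G a) ->
    exists2 E, Es E & List.Forall G E.
  move=> fG MG nMG; apply: NNPP => aG; apply: nMG => a.
  by split; [exact: MG | exact: maxM fG MG aG a].
have [h1|h1] := classic (forall a, M a <-> G1 a); first by left.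
have [h2|h2] := classic (forall a, M a <-> G2 a); first by right.
have [E1 Es1 G1E1] := bad _ f1 (fun a Ma => proj1 (proj1 (eqM a) Ma)) h1.
have [E2 Es2 G2E2] := bad _ f2 (fun a Ma => proj2 (proj1 (eqM a) Ma)) h2.
have [E EsE HE] := dir _ _ Es1 Es2.
case: aM; exists E => //.
have := List.Forall_and (HE _ f1 (or_introl G1E1)) (HE _ f2 (or_intror G2E2)).
by apply: List.Forall_impl => a /eqM.
Qed.

Theorem prime_filter K Es :
  ifilter K -> (forall E, Es E -> List.Forall S E) -> (exists E, Es E) -> directed Es ->
  avoids Es K -> exists M, [/\ mi M, (forall a, K a -> M a) & avoids Es M].
Proof.
move=> fK EsS EsE dir aK.
have [M [fM KM aM maxM]] := exists_maximal_avoiding fK aK.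
by exists M; split=> //; exact: (maximal_avoiding_mi EsS EsE dir fM aM maxM).
Qed.

Corollary mi_separation K c : ifilter K -> S c -> ~ K c ->
  exists M, [/\ mi M, (forall a, K a -> M a) & ~ M c].
Proof.
move=> fK Sc nKc.
have EsS E : [:: c] = E -> List.Forall S E by move=> <-; constructor.
have dir : directed (eq [:: c]) by move=> E1 E2 <- <-; exists [:: c] => // F _ [].
have aK : avoids (eq [:: c]) K by case=> E <- /List.Forall_cons_iff [].
have [M [mM KM aM]] := prime_filter fK EsS (ex_intro _ _ erefl) dir aK.
by exists M; split=> // Mc; apply: aM; exists [:: c]; do ?constructor.
Qed.

Lemma mi_cap_sub F G1 G2 : mi F -> ifilter G1 -> ifilter G2 ->
  (forall s, G1 s -> G2 s -> F s) -> (forall s, G1 s -> F s) \/ (forall s, G2 s -> F s).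
Proof.
move=> [fF _ irr] f1 f2 cap.
case: (irr (filter_join F G1) (filter_join F G2)); try exact: filter_join_ifilter.
- move=> a; split=> [Fa|]; first by split; apply: filter_joinl.
  move=> [[Sa [A1 [B1 [FA1 GB1 le1]]]] [_ [A2 [B2 [FA2 GB2 le2]]]]].
  have SA A : List.Forall F A -> List.Forall S A.
    by apply: List.Forall_impl => x; apply: ifilterS.
  have Sw : S (himps (A2 ++ A1) a).
    by apply: S_himps => //; apply/List.Forall_app; split; apply: SA.
  apply: (ifilter_himps (l := A2 ++ A1) fF _ Sa); first by apply/List.Forall_app.
  apply: cap.
  + apply: (ifilter_meet f1 GB1) => //; rewrite le_himps // big_cat /=.
    apply: le_trans le1; rewrite meetC lexI leIr andbT; apply/leIxl/leIr.
  + apply: (ifilter_meet f2 GB2) => //; rewrite le_himps // big_cat /=.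
    apply: le_trans le2; rewrite meetC lexI leIr andbT; apply/leIxl/leIl.
- by move=> h; left=> s G1s; apply/h; apply: filter_joinr => //; exact: ifilterS f1 G1s.
- by move=> h; right=> s G2s; apply/h; apply: filter_joinr => //; exact: ifilterS f2 G2s.
Qed.

Lemma mi_bigcap_sub F Fs : mi F -> List.Forall ifilter Fs ->
  (forall s, S s -> List.Forall (fun G => G s) Fs -> F s) ->
  exists2 G, List.In G Fs & forall s, G s -> F s.
Proof.
move=> mF; elim: Fs => [|G Fs IH] fFs capF.
  by case: mF => _ [a Sa nFa] _; case: nFa; apply: capF => //; constructor.
case/List.Forall_cons_iff: fFs => fG fFs.
case: (mi_cap_sub mF fG (ifilter_bigcap fFs)) => [s Gs [Ss FsS]|GF|FsF].
- by apply: capF => //; constructor.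
- by exists G => //; left.
- have [G' G'Fs G'F] := IH fFs (fun s Ss FsS => FsF s (conj Ss FsS)).
  by exists G' => //; right.
Qed.

Lemma mi_join_prime F a b : mi F -> S a -> S b -> F (a `|` b) -> F a \/ F b.
Proof.
move=> mF Sa Sb Fab; have [fF _ _] := mF.
pose Fimp x c := S c /\ F (imp x c).
have fFimp x : S x -> ifilter (Fimp x).
  move=> Sx; split.
  - by move=> c [].
  - by split; [exact: S_top | rewrite imp_top //; exact: ifilter_top].
  - move=> u v Su Sv [_ Fxu] [_ Fxuv]; split=> //.
    apply: (ifilter_meet (l := [:: imp x u; imp x (imp u v)])) => //.
    + by do !constructor.
    + by rewrite !big_cons big_nil meetx1; exact: imp_meet_le.
    + exact: S_imp.
have Fimp_self x : S x -> Fimp x x.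
  by move=> Sx; split=> //; rewrite imp_top //; exact: ifilter_top.
case: (mi_cap_sub mF (fFimp a Sa) (fFimp b Sb)) => [c [Sc Fac] [_ Fbc]|aF|bF].
- apply: (ifilter_meet (l := [:: a `|` b; imp a c; imp b c])) => //.
    by do !constructor.
  by rewrite !big_cons big_nil meetx1; exact: join_imp_le.
- by left; apply: aF; exact: Fimp_self.
- by right; apply: bF; exact: Fimp_self.
Qed.

(** * Truth lemmas in the dual space *)

Local Notation X := (dual_space imp S).
Local Notation dle := (@dual_le d H imp S).

Lemma ifilter_sval (G : X) : ifilter (sval G).
Proof. by case: (svalP G). Qed.

Lemma himps_mem (F : X) l c : List.Forall S l -> S c ->
  sval F (himps l c) <-> forall G : X, dle F G -> List.Forall (sval G) l -> sval G c.
Proof.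
move=> Sl Sc; have fF := ifilter_sval F; split=> [Fi G FG Gl|h].
  by apply: (ifilter_himps (ifilter_sval G) Gl Sc); apply: FG.
apply: NNPP => nF.
have nKc : ~ filter_join (sval F) (fun x => List.In x l) c.
  move=> [_ [A [B [FA lB le1]]]]; apply: nF.
  apply: (ifilter_meet fF FA); last exact: S_himps.
  by rewrite le_himps //; apply: le_trans le1; apply: leI2 => //; exact: meets_le_sub.
have [M [mM KM nMc]] := mi_separation (filter_join_ifilter _ fF) Sc nKc.
apply/nMc/(h (exist _ M mM)).
- by move=> a Fa; apply: KM; exact: filter_joinl.
- apply/List.Forall_forall => x xl; apply: KM; apply: filter_joinr => //.
  exact: (proj1 (List.Forall_forall _ _) Sl x xl).
Qed.

Lemma mem_imp_iff a b (Pa Pb : X -> Prop) (G : X) : S a -> S b ->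
  (forall G, sval G a <-> Pa G) -> (forall G, sval G b <-> Pb G) ->
  sval G (imp a b) <-> ~ exists y, dle G y /\ Pa y /\ ~ Pb y.
Proof.
move=> Sa Sb ha hb.
have := @himps_mem G [:: a] b (List.Forall_cons _ Sa (List.Forall_nil _)) Sb.
rewrite /himps /= => ->.
split=> [h [y [Gy [ay nby]]]|h y Gy /List.Forall_cons_iff [ay _]].
- by apply/nby/hb/h => //; constructor=> //; apply/ha.
- by apply/hb; apply: NNPP => nb; apply: h; exists y; rewrite -ha.
Qed.

Lemma eval_truth (v : nat * nat -> H) g (G : X) : (forall q, S (v q)) -> in_lang L g ->
  sval G (eval imp v g) <-> eval_up dle (fun q y => sval y (v q)) g G.
Proof.
move=> Sv; elim: g G => [q|a IHa b IHb|a IHa b IHb|a IHa b IHb|a IHa| |] G lg //=;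
  have fG := ifilter_sval G.
- have [Sab [/andP [_ la] lb]] := (S_eval Sv lg, andP lg).
  have [Sa Sb] := (S_eval Sv la, S_eval Sv lb).
  rewrite -IHa // -IHb //; split=> [Fab|[Fa Fb]].
    by split; [apply: ifilter_le fG Fab (leIl _ _) Sa | apply: ifilter_le fG Fab (leIr _ _) Sb].
  apply: (ifilter_meet (l := [:: eval imp v a; eval imp v b])) fG _ _ Sab.
    by do !constructor.
  by rewrite !big_cons big_nil meetx1.
- have [Sab [/andP [_ la] lb]] := (S_eval Sv lg, andP lg).
  have [Sa Sb] := (S_eval Sv la, S_eval Sv lb).
  rewrite -IHa // -IHb //; split=> [|[Fa|Fb]]; first exact: mi_join_prime (svalP G) Sa Sb.
  + exact: ifilter_le fG Fa (leUl _ _) Sab.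
  + exact: ifilter_le fG Fb (leUr _ _) Sab.
- case/andP: lg => la lb.
  exact: mem_imp_iff (S_eval Sv la) (S_eval Sv lb) (fun G => IHa G la) (fun G => IHb G lb).
- case/andP: lg => ln la; apply: mem_imp_iff (S_eval Sv la) (S_bot_neg ln) _ _ => [G'|G'].
    exact: IHa.
  by split=> // /(mi_nbot (svalP G')).
- by split=> // /(mi_nbot (svalP G)).
- by split=> // _; exact: ifilter_top.
Qed.

Lemma entails_of_mi E1 E : List.Forall S E ->
  (forall G : X, List.Forall (sval G) E1 -> List.Forall (sval G) E) ->
  forall F, ifilter F -> List.Forall F E1 -> List.Forall F E.
Proof.
move=> /List.Forall_forall SE h F fF FE1; apply: NNPP => /not_Forall_exists [e eE nFe].
have [M [mM FM nMe]] := mi_separation fF (SE e eE) nFe.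
apply: nMe; have /List.Forall_forall := h (exist _ M mM) (List.Forall_impl _ FM FE1).
exact.
Qed.

Section FiniteValuations.
Hypothesis neg_zero : l_neg L -> l_zero L.

(* [fin_assign A] reads the values paired with [m] in [A] as the copies
   [x_m^1, x_m^2, ...] of [x_m], padded with [\top]; [(size A).+1] copies
   always suffice. *)
Definition fin_assign (A : seq (nat * H)) (q : nat * nat) : H :=
  nth \top [seq x.2 | x <- A & x.1 == q.1] q.2.-1.

Definition fin_val (A : seq (nat * H)) (m : nat) (G : X) : Prop :=
  forall a, (m, a) \in A -> sval G a.

Definition bold_val (A : seq (nat * H)) (p : fm nat) : seq H :=
  map (eval imp (fin_assign A)) (bold (size A).+1 p).

Lemma S_fin_assign A : (forall x, x \in A -> S x.2) -> forall q, S (fin_assign A q).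
Proof.
move=> SA q; rewrite /fin_assign; set s := [seq x.2 | x <- A & x.1 == q.1].
have [qs|sq] := ltnP q.2.-1 (size s); last by rewrite nth_default //; exact: S_top.
by have /mapP [x] := mem_nth \top qs; rewrite mem_filter => /andP [_ /SA] Sx ->.
Qed.

Lemma fin_val_copies A m G :
  fin_val A m G <-> List.Forall (fun j => sval G (fin_assign A (m, j))) (iota 1 (size A).+1).
Proof.
rewrite List.Forall_forall /fin_val /fin_assign.
set s := [seq x.2 | x <- A & x.1 == m]; split=> [h j _|h a mA].
- have [js|sj] := ltnP j.-1 (size s).
    have /mapP [x] := mem_nth \top js; rewrite mem_filter => /andP [/eqP x1 xA] ->.
    by apply: h; rewrite -x1 -surjective_pairing.
  by rewrite nth_default //; exact: ifilter_top (ifilter_sval G).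
- have a_s : a \in s by apply/mapP; exists (m, a) => //; rewrite mem_filter eqxx.
  have le_sA : (size s <= size A)%N by rewrite /s size_map size_filter count_size.
  have := h (index a s).+1; rewrite succnK nth_index //; apply.
  apply/In_mem; rewrite mem_iota /= add1n !ltnS.
  by apply: leq_trans le_sA; apply: ltnW; rewrite index_mem.
Qed.

Lemma S_bold_val A p : (forall x, x \in A -> S x.2) -> in_lang L p ->
  List.Forall S (bold_val A p).
Proof.
move=> SA lp; apply/List.Forall_map; apply: List.Forall_impl (in_lang_bold _ neg_zero lp).
by move=> g; apply: S_eval; exact: S_fin_assign.
Qed.

Lemma fin_val_truth A p (G : X) : (forall x, x \in A -> S x.2) -> in_lang L p ->
  eval_up dle (fin_val A) p G <-> List.Forall (sval G) (bold_val A p).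
Proof.
move=> SA lp; rewrite List.Forall_map.
have /List.Forall_forall lb := in_lang_bold (size A).+1 neg_zero lp.
have uA : up_val dle (fun q y => sval y (fin_assign A q)) by move=> q F G' FG; apply: FG.
transitivity (List.Forall (fun g => eval_up dle (fun q y => sval y (fin_assign A q)) g G)
                (bold (size A).+1 p)).
  rewrite (eval_up_bold dual_le_refl dual_le_trans _ _ _ uA).
  by apply: eval_up_ext => m y; rewrite fin_val_copies.
split=> /List.Forall_forall h; apply/List.Forall_forall => g gb.
- by rewrite eval_truth //; [exact: h | exact: S_fin_assign | exact: lb].
- by rewrite -eval_truth //; [exact: h | exact: S_fin_assign | exact: lb].
Qed.

Lemma fin_val_sub A A' m G : {subset A <= A'} -> fin_val A' m G -> fin_val A m G.
Proof. by move=> AA' h a /AA'; apply: h. Qed.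

Lemma fin_val_positive p A A' y : positive p -> {subset A <= A'} ->
  eval_up dle (fin_val A') p y -> eval_up dle (fin_val A) p y.
Proof. by move=> pp AA'; apply: eval_up_positive => // m G; exact: fin_val_sub. Qed.

Lemma fin_val_negative p A A' y : negative p -> {subset A <= A'} ->
  eval_up dle (fin_val A) p y -> eval_up dle (fin_val A') p y.
Proof. by move=> np AA'; apply: eval_up_negative => // m G; exact: fin_val_sub. Qed.

(** * Esakia's lemma *)

Section Esakia.
Variable D : nat -> H -> Prop.
Hypothesis DS : forall m a, D m a -> S a.

Definition closed_val (m : nat) (G : X) : Prop := forall a, D m a -> sval G a.

Definition within (A : seq (nat * H)) : Prop := forall q, q \in A -> D q.1 q.2.

Lemma within_S A : within A -> forall x, x \in A -> S x.2.
Proof. by move=> wA x /wA; apply: DS. Qed.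

Lemma within_cat A1 A2 : within A1 -> within A2 -> within (A1 ++ A2).
Proof. by move=> w1 w2 q; rewrite mem_cat => /orP [/w1|/w2]. Qed.

Lemma closed_fin_val A m G : within A -> closed_val m G -> fin_val A m G.
Proof. by move=> wA h a /wA; apply: h. Qed.

Lemma within_collect T (Q : T -> seq (nat * H) -> Prop) l :
  (forall t A A', {subset A <= A'} -> Q t A -> Q t A') ->
  List.Forall (fun t => exists2 A, within A & Q t A) l ->
  exists2 A, within A & List.Forall (fun t => Q t A) l.
Proof.
move=> Qmono; elim: l => [|t l IH]; first by exists [::].
case/List.Forall_cons_iff=> [[A1 w1 Q1] /IH [A2 w2 Q2]].
exists (A1 ++ A2); first exact: within_cat.
constructor; first exact: Qmono (mem_subseq (prefix_subseq _ _)) Q1.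
by apply: List.Forall_impl Q2 => t'; apply: Qmono (mem_subseq (suffix_subseq _ _)).
Qed.

Lemma closed_val_refuted m G : ~ closed_val m G -> exists2 A, within A & ~ fin_val A m G.
Proof.
move=> nU; have [x Dx nGx] : exists2 x, D m x & ~ sval G x.
  by apply: NNPP => nn; apply: nU => x Dx; apply: NNPP => nGx; apply: nn; exists x.
exists [:: (m, x)]; first by move=> q; rewrite inE => /eqP ->.
by move=> h; apply/nGx/h; rewrite mem_head.
Qed.

Definition bold_vals (c : fm nat) (E : seq H) : Prop := exists2 A, within A & E = bold_val A c.

Lemma bold_vals_directed c : negative c -> in_lang L c -> directed (bold_vals c).
Proof.
move=> nc lc E1 E2 [A1 w1 ->] [A2 w2 ->].
have w12 := within_cat w1 w2; exists (bold_val (A1 ++ A2) c); first by exists (A1 ++ A2).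
have truth A G : within A ->
    List.Forall (sval G) (bold_val A c) <-> eval_up dle (fin_val A) c G.
  by move=> wA; rewrite fin_val_truth //; exact: within_S.
have SE := S_bold_val (within_S w12) lc.
move=> F fF [] FE; apply: (entails_of_mi SE _ fF FE) => G; rewrite !truth //.
- exact: fin_val_negative nc (mem_subseq (prefix_subseq _ _)).
- exact: fin_val_negative nc (mem_subseq (suffix_subseq _ _)).
Qed.

Definition forced_by (a : fm nat) (x : H) : Prop :=
  S x /\ exists2 A, within A & forall y : X, eval_up dle (fin_val A) a y -> sval y x.

Lemma esakia_avoid a c (G : X) : positive a -> negative c -> in_lang L c ->
  (forall A, within A -> exists y,
     [/\ dle G y, eval_up dle (fin_val A) a y & ~ eval_up dle (fin_val A) c y]) ->
  avoids (bold_vals c) (filter_join (sval G) (forced_by a)).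
Proof.
move=> pa nc lc refA [E [A0 w0 ->] KE].
pose Q e A := forall y : X, dle G y -> eval_up dle (fin_val A) a y -> sval y e.
have Qmono e A A' : {subset A <= A'} -> Q e A -> Q e A'.
  by move=> AA' h y Gy ay; apply: h Gy (fin_val_positive pa AA' ay).
have [A1 w1 QA1] : exists2 A, within A & List.Forall (fun e => Q e A) (bold_val A0 c).
  apply: within_collect Qmono _; apply: List.Forall_impl KE => e [Se [As [Bs [GAs TBs le1]]]].
  have [Ae we Me] : exists2 A, within A &
      List.Forall (fun x => forall y : X, eval_up dle (fin_val A) a y -> sval y x) Bs.
    apply: within_collect; last by apply: List.Forall_impl TBs => x [_ ?].
    by move=> x A A' AA' h y /(fin_val_positive pa AA'); apply: h.
  exists Ae => // y Gy ay.
  apply: (ifilter_meet (ifilter_sval y) (l := As ++ Bs)) => //; last by rewrite big_cat.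
  apply/List.Forall_app; split; first by apply: List.Forall_impl GAs => x /Gy.
  by apply: List.Forall_impl Me => x; apply.
have [y [Gy ay ncy]] := refA _ (within_cat w0 w1).
apply/ncy/(fin_val_negative nc (mem_subseq (prefix_subseq A0 A1))).
rewrite fin_val_truth //; last exact: within_S.
apply: List.Forall_impl QA1 => e; apply=> //.
exact: fin_val_positive pa (mem_subseq (suffix_subseq _ _)) ay.
Qed.

(* Otherwise the prime filter theorem, applied to the filter generated by [G] and
   the elements forced by [a], avoiding every [bold_val A c], yields a
   counterexample above [G]. *)
Lemma esakia_imp a c (G : X) : positive a -> in_lang L a -> negative c -> in_lang L c ->
  (forall y, ~ eval_up dle closed_val a y ->
     exists2 A, within A & ~ eval_up dle (fin_val A) a y) ->
  (forall y, eval_up dle closed_val c y -> exists2 A, within A & eval_up dle (fin_val A) c y) ->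
  eval_up dle closed_val (FImp a c) G ->
  exists2 A, within A & eval_up dle (fin_val A) (FImp a c) G.
Proof.
move=> pa la nc lc IHa IHc hG; apply: NNPP => nA.
have refA A : within A -> exists y,
    [/\ dle G y, eval_up dle (fin_val A) a y & ~ eval_up dle (fin_val A) c y].
  move=> wA; apply: NNPP => ny; apply: nA; exists A => // -[y [Gy [ay ncy]]].
  by apply: ny; exists y.
have bvS E : bold_vals c E -> List.Forall S E.
  by case=> A wA ->; exact: S_bold_val (within_S wA) lc.
have bv0 : exists E, bold_vals c E by exists (bold_val [::] c), [::].
have [M [mM KM aM]] := prime_filter (filter_join_ifilter _ (ifilter_sval G)) bvS bv0
  (bold_vals_directed nc lc) (esakia_avoid pa nc lc refA).
apply: hG; exists (exist _ M mM); split.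
  by move=> x Gx; apply: KM; exact: filter_joinl (ifilter_sval G) Gx.
split.
- apply: NNPP => /IHa [A wA]; apply; rewrite fin_val_truth //; last exact: within_S.
  have /List.Forall_forall SE := S_bold_val (within_S wA) la.
  apply/List.Forall_forall => x xE; apply: KM; apply: filter_joinr; last exact: SE.
  split; first exact: SE.
  exists A => // y; rewrite fin_val_truth //; last exact: within_S.
  by move/List.Forall_forall; apply.
- move=> /IHc [A wA cA]; apply: aM; exists (bold_val A c); first by exists A.
  by move: cA; rewrite fin_val_truth //; exact: within_S.
Qed.

Lemma esakia p b (G : X) : in_lang L p -> polar b p ->
  if b then ~ eval_up dle closed_val p G -> exists2 A, within A & ~ eval_up dle (fin_val A) p G
  else eval_up dle closed_val p G -> exists2 A, within A & eval_up dle (fin_val A) p G.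
Proof.
have catl (A1 A2 : seq (nat * H)) : {subset A1 <= A1 ++ A2} := mem_subseq (prefix_subseq A1 A2).
have catr (A1 A2 : seq (nat * H)) : {subset A2 <= A1 ++ A2} := mem_subseq (suffix_subseq A1 A2).
elim: p b G => [m|a IHa c IHc|a IHa c IHc|a IHa c IHc|a IHa| |] [] G lp pol //=.
- exact: closed_val_refuted.
- case/andP: lp => /andP [_ la] lc; case/andP: pol => pa pc h.
  have [ha|na] := classic (eval_up dle closed_val a G).
  + have [A wA nc] := IHc true G lc pc (fun hc => h (conj ha hc)).
    by exists A => // -[].
  + by have [A wA na'] := IHa true G la pa na; exists A => // -[].
- case/andP: lp => /andP [_ la] lc; case/andP: pol => pa pc [ha hc].
  have [A1 w1 h1] := IHa false G la pa ha; have [A2 w2 h2] := IHc false G lc pc hc.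
  exists (A1 ++ A2); first exact: within_cat.
  by split; [exact: fin_val_negative pa (catl _ _) h1 | exact: fin_val_negative pc (catr _ _) h2].
- case/andP: lp => /andP [_ la] lc; case/andP: pol => pa pc h.
  have [A1 w1 h1] := IHa true G la pa (h \o @or_introl _ _).
  have [A2 w2 h2] := IHc true G lc pc (h \o @or_intror _ _).
  exists (A1 ++ A2); first exact: within_cat.
  by case=> [/(fin_val_positive pa (catl _ _))|/(fin_val_positive pc (catr _ _))].
- case/andP: lp => /andP [_ la] lc; case/andP: pol => pa pc.
  case=> [/(IHa false G la pa) [A wA hA]|/(IHc false G lc pc) [A wA hA]].
  + by exists A => //; left.
  + by exists A => //; right.
- case/andP: lp => la lc; case/andP: pol => pa pc.
  move=> /NNPP [y [Gy [ay ncy]]].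
  have [A1 w1 h1] := IHa false y la pa ay; have [A2 w2 h2] := IHc true y lc pc ncy.
  exists (A1 ++ A2); first exact: within_cat.
  apply; exists y; split=> //; split; first exact: fin_val_negative pa (catl _ _) h1.
  by move/(fin_val_positive pc (catr _ _)).
- case/andP: lp => la lc; case/andP: pol => pa pc.
  by apply: esakia_imp => // y; [exact: IHa true y la pa | exact: IHc false y lc pc].
- case/andP: lp => _ la; move=> /NNPP [y [Gy [ay _]]].
  have [A wA hA] := IHa false y la pol ay.
  by exists A => // h; apply: h; exists y; split=> //; split.
- case/andP: lp => ln la.
  exact: (@esakia_imp a FZero) (neg_zero ln) (fun y => IHa true y la pol) (fun y f => False_ind _ f).
- by move=> _; exists [::].
- by move=> _; exists [::].
Qed.

End Esakia.

Lemma fin_val_refutation phis (U : nat -> X -> Prop) (G0 : X) :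
  all (fun p => sahl_body p && in_lang L p) phis -> up_val dle U ->
  List.Forall (fun p => ~ eval_up dle U p G0) phis ->
  exists2 A, (forall x, x \in A -> S x.2) &
    List.Forall (fun p => ~ eval_up dle (fin_val A) p G0) phis.
Proof.
move=> hphis uU nphis.
have [P [O [[hP hO] okO hW]]] :=
  sahl_bodies_finitely_refuted dual_le_refl dual_le_trans neg_zero hphis uU nphis.
(* [closed_val D] is the least upset valuation containing the points of [P]. *)
pose D m s := S s /\ List.Forall (fun F => F s) [seq sval q.2 | q <- P & q.1 == m].
have DS m s : D m s -> S s by case.
have closed_U m G : closed_val D m G -> U m G.
  move=> hG; have Fs_ifilter : List.Forall ifilter [seq sval q.2 | q <- P & q.1 == m].
    by apply/List.Forall_map/List.Forall_forall => q _; exact: ifilter_sval.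
  have [_ /List.in_map_iff [q [<- /List.filter_In [qP /eqP q1]]] qG] :=
    mi_bigcap_sub (svalP G) Fs_ifilter (fun s Ss Fs => hG s (conj Ss Fs)).
  have /List.Forall_forall /(_ q qP) := hP; rewrite q1 => Uq.
  exact: uU _ _ _ qG Uq.
have closed_P : List.Forall (fun q => closed_val D q.1 q.2) P.
  apply/List.Forall_forall => q qP s [_ /List.Forall_forall]; apply.
  by apply/List.in_map_iff; exists q; split=> //; apply/List.filter_In; rewrite eqxx.
have [A wA nA] : exists2 A, within D A &
    List.Forall (fun o => positive o.2 /\ ~ eval_up dle (fin_val A) o.2 o.1) O.
  apply: within_collect.
    by move=> o A A' AA' [po no]; split=> // /(fin_val_positive po AA').
  apply: List.Forall_impl (List.Forall_and okO hO) => o [/andP [po lo] no].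
  have nD : ~ eval_up dle (closed_val D) o.2 o.1 by move/(eval_up_positive closed_U po).
  by have [A wA nA] := esakia DS o.1 lo po nD; exists A.
exists A; first by move=> x /wA [].
apply: hW; first by move=> m F G FG h a /h /FG.
split; first by apply: List.Forall_impl closed_P => q; exact: closed_fin_val.
by apply: List.Forall_impl nA => o [].
Qed.

Lemma APhi_fails_in_subreduct phis A (G0 : X) : (forall x, x \in A -> S x.2) ->
  all (@in_lang L nat) phis -> List.Forall (fun p => ~ eval_up dle (fin_val A) p G0) phis ->
  exists2 v, (forall o, S (v o)) & ~ sval G0 (eval imp v (APhi_k phis (size A).+1)).
Proof.
move=> SA lphis nphis; have fG0 := ifilter_sval G0.
pose J p := filter_join (sval G0) (fun x => List.In x (bold_val A p)).
have [yv [Sy nGy Jy]] : exists yv, [/\ S yv, ~ sval G0 yv & List.Forall (fun p => J p yv) phis].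
  apply: NNPP => nn.
  have fJ : List.Forall ifilter (map J phis).
    by apply/List.Forall_map/List.Forall_forall => p _; exact: filter_join_ifilter.
  have capJ s : S s -> List.Forall (fun F => F s) (map J phis) -> sval G0 s.
    by move=> Ss /List.Forall_map Js; apply: NNPP => nGs; apply: nn; exists s.
  have [_ /List.in_map_iff [p [<- pphis]] JG] := mi_bigcap_sub (svalP G0) fJ capJ.
  have lp : in_lang L p by move/all_Forall/List.Forall_forall: lphis; apply.
  move/List.Forall_forall: nphis => /(_ p pphis); apply.
  rewrite fin_val_truth //; apply/List.Forall_forall => x xE; apply: JG.
  apply: filter_joinr => //.
  exact: (proj1 (List.Forall_forall _ _) (S_bold_val SA lp) x xE).
pose v o := if o is Some q then fin_assign A q else yv.
have Sv o : S (v o) by case: o => [q|] //=; exact: S_fin_assign.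
exists v => // G0Phi; apply: nGy.
have e p : eval imp v (imps (map (fm_map Some) (bold (size A).+1 p)) (FVar None)) =
    himps (bold_val A p) yv.
  rewrite eval_imps -map_comp /bold_val; congr (himps _ _).
  by apply: eq_map => g /=; rewrite eval_map.
move: G0Phi; rewrite /APhi_k eval_imps -map_comp (eq_map e) => G0Phi.
apply: (ifilter_himps fG0 _ Sy G0Phi); apply/List.Forall_map/List.Forall_forall => p pphis.
have lp : in_lang L p by move/all_Forall/List.Forall_forall: lphis; apply.
apply/(himps_mem _ (S_bold_val SA lp) Sy) => G' G0G' hG'.
apply: (filter_join_least (ifilter_sval G') G0G' _ (proj1 (List.Forall_forall _ _) Jy p pphis)).
exact: (proj1 (List.Forall_forall _ _) hG').
Qed.

End FiniteValuations.
End Filters.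

(* Since [~ 1 = 0], a subreduct for [L] is also one for [L] with [0] added whenever
   [~] is present; the translation [bold] turns [~ phi] into an implication into [0],
   which is why the development above assumes [l_neg L -> l_zero L]. *)
Definition zero_closure (L : lang) : lang :=
  Lang (l_and L) (l_or L) (l_neg L) (l_zero L || l_neg L) (l_one L).

Lemma zero_closure_neg_zero L : l_neg (zero_closure L) -> l_zero (zero_closure L).
Proof. by move=> /= ->; rewrite orbT. Qed.

Lemma in_lang_zero_closure L V (p : fm V) : in_lang L p -> in_lang (zero_closure L) p.
Proof.
elim: p => //= [a IHa b IHb|a IHa b IHb|a IHa b IHb|a IHa|].
- by case/andP=> /andP [-> /IHa ->] /IHb.
- by case/andP=> /andP [-> /IHa ->] /IHb.
- by case/andP=> /IHa -> /IHb.
- by case/andP=> -> /IHa.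
- by move=> ->.
Qed.

Lemma subreduct_zero_closure L d (H : tbLatticeType d) (imp : H -> H -> H) S :
  heyting_imp imp -> subreduct L imp S -> subreduct (zero_closure L) imp S.
Proof.
move=> Himp HS; case: (HS) => ne [Simp [Sand [Sor [Sneg [Szero Sone]]]]].
do 6!split=> //.
by case/orP=> [/Szero|/(S_bot_neg Himp HS)].
Qed.

Theorem theorem9p6 (L : lang) (d : Order.disp_t) (H : tbLatticeType d)
  (imp : H -> H -> H) (Himp : heyting_imp imp)
  (S : H -> Prop) (HS : subreduct L imp S)
  (phis : seq (fm nat)) (y z : nat) (HPhi : sahlqvist_qe L phis y z) :
  valid_sub_set imp S (APhi phis) ->
  valid_up_set (@dual_le d H imp S) (APhi phis).
Proof.
move=> valid _ [k k0 ->] V uV x.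
have HS0 := subreduct_zero_closure Himp HS.
have nz := @zero_closure_neg_zero L.
have [_ _ _ bodies langs] := HPhi.
have langs0 : all (@in_lang (zero_closure L) nat) phis.
  by apply: sub_all langs => p; exact: in_lang_zero_closure.
have hphis : all (predI (@sahl_body nat) (@in_lang (zero_closure L) nat)) phis.
  by rewrite all_predI bodies langs0.
rewrite /APhi_k; apply/(eval_up_imps dual_le_refl dual_le_trans _ _ _ uV) => x' _ hall.
apply: NNPP => ny.
pose U m y := List.Forall (fun j => V (Some (m, j)) y) (iota 1 k).
have uU : up_val (@dual_le d H imp S) U.
  by move=> m G G' GG'; apply: List.Forall_impl => j; exact: uV _ _ _ GG'.
have nU : List.Forall (fun p => ~ eval_up (@dual_le d H imp S) U p x') phis.
  move/List.Forall_map: hall; apply: List.Forall_impl => p hp.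
  exact (eval_up_bold_imp dual_le_refl dual_le_trans uV hp ny).
have [A SA nA] := fin_val_refutation Himp HS0 nz hphis uU nU.
have [v Sv nv] := APhi_fails_in_subreduct Himp HS0 nz SA langs0 nA.
apply: nv; rewrite (valid _ (ex_intro2 _ _ (size A).+1 (ltn0Sn _) erefl) v Sv).
exact: ifilter_top (ifilter_sval x').
Qed.
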